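(* Let $R$ be a finite chain ring with $R/\operatorname{rad}R\cong\mathbb{F}_q$ and composition length $m\geq 3$ of ${}_RR$. Then there is no $(q^m+q^{m-1}+1,2)$-arc (hyperoval) in the projective Hjelmslev plane $\mathrm{PHG}(2,R)$.
   Context: A finite chain ring is a finite (not necessarily commutative) ring whose left ideals (equivalently right ideals) form a chain under inclusion; $q$ is the order of its residue field $R/\operatorname{rad}R$ and $m$ is the composition length of ${}_RR$, so $|R|=q^m$. The projective Hjelmslev plane $\mathrm{PHG}(2,R)$ has as points the free rank-$1$ submodules of $R^3_R$, as lines the free rank-$2$ submodules of $R^3_R$, with incidence given by set inclusion. An $(n,u)$-arc in $\mathrm{PHG}(2,R)$ is an $n$-multiset of points such that every line contains at most $u$ of its points, counted with multiplicity. *)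

From HB Require Import structures.
From mathcomp Require Import all_boot all_order all_algebra.
Set Implicit Arguments. Unset Strict Implicit. Unset Printing Implicit Defensive.
Import GRing.Theory.
Local Open Scope ring_scope.

Section ChainRing.
Variable R : finNzRingType.

Definition is_lideal (I : {set R}) : bool :=
  [&& (0 : R) \in I,
      [forall x in I, [forall y in I, x - y \in I]] &
      [forall r : R, [forall x in I, r * x \in I]]].

Definition chain_ring : Prop :=
  forall I J : {set R}, is_lideal I -> is_lideal J -> (I \subset J) \/ (J \subset I).

Definition is_unitR (x : R) : bool := [exists y : R, (x * y == 1) && (y * x == 1)].

Definition radR : {set R} := [set x : R | [forall r : R, is_unitR (1 - r * x)]].

(* q = |R / rad R|, the order of the residue field *)
Definition residue_order : nat := (#|[set: R]| %/ #|radR|)%N.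

(* composition length of _R R: the maximal length of a strictly increasing
   chain of left submodules (= left ideals) of _R R *)
Definition lideal_chain (s : seq {set R}) : Prop :=
  all is_lideal s /\ sorted (fun A B : {set R} => A \proper B) s.

Definition comp_length (m : nat) : Prop :=
  (exists s, lideal_chain s /\ size s = m.+1) /\
  (forall s, lideal_chain s -> (size s <= m.+1)%N).

Definition vec := {ffun 'I_3 -> R}.
Definition vadd (x y : vec) : vec := [ffun i => x i + y i].
Definition vsmul (x : vec) (r : R) : vec := [ffun i => x i * r].
Definition vzero : vec := [ffun _ => 0].

(* points: free rank-1 submodules of R^3_R *)
Definition is_point (P : {set vec}) : bool :=
  [exists x : vec,
    (P == [set vsmul x r | r : R]) &&
    [forall r : R, (vsmul x r == vzero) ==> (r == 0)]].

(* lines: free rank-2 submodules of R^3_R *)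
Definition is_line (L : {set vec}) : bool :=
  [exists x : vec, [exists y : vec,
    (L == [set vadd (vsmul x r) (vsmul y s) | r : R, s : R]) &&
    [forall r : R, [forall s : R,
       (vadd (vsmul x r) (vsmul y s) == vzero) ==> ((r == 0) && (s == 0))]]]].

(* an (n,u)-arc: a multiset of points (multiplicity function k, supported on
   points) of total size n, with every line containing at most u points
   counted with multiplicity; incidence is inclusion *)
Definition is_arc (k : {set vec} -> nat) (n u : nat) : Prop :=
  (forall P, (0 < k P)%N -> is_point P) /\
  (\sum_(P : {set vec} | is_point P) k P)%N = n /\
  (forall L, is_line L -> (\sum_(P : {set vec} | is_point P && (P \subset L)) k P <= u)%N).

End ChainRing.

From mathcomp Require Import all_boot all_algebra all_fingroup.
From mathcomp Require Import zify.
Set Implicit Arguments. Unset Strict Implicit. Unset Printing Implicit Defensive.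
Import GRing.Theory.
Local Open Scope ring_scope.

(* Write q = |R / rad R|, r = |rad R| and p = q^(m-1).  Refining a composition
   series through rad R gives r <= p, so the arc has n = q p + p + 1 points while a
   point lies on at most |R| + r = q r + r < n lines.  Counting the arc points on
   the lines through one arc point then shows that all multiplicities are 1 and
   that two arc points share at most one line.  Two distinct neighbouring points
   share at least two lines, because a radical coordinate has a nonzero left
   annihilator, so the neighbour classes of the arc points are pairwise disjoint.
   Each class has at least (q - 1) r^3 free generators, and no free vector lies in
   (rad R)^3; hence n (q - 1) r^3 + r^3 <= q^3 r^3, which fails once p >= q^2,
   i.e. once m >= 3. *)

Lemma sum_card_disjoint_le (I T : finType) (A : {set I}) (F : I -> {set T}) (B : {set T}) :
  (forall i, i \in A -> F i \subset B) ->
  (forall i j, i \in A -> j \in A -> i != j -> [disjoint F i & F j]) ->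
  (\sum_(i in A) #|F i| <= #|B|)%N.
Proof.
move=> FB Fdisj; rewrite -sum1_card.
have -> : (\sum_(i in A) #|F i| = \sum_(i in A) \sum_t (t \in F i : nat))%N.
  by apply: eq_bigr => i _; rewrite -sum1_card big_mkcond; apply: eq_bigr => t _; case: (t \in F i).
rewrite exchange_big [X in (_ <= X)%N]big_mkcond; apply: leq_sum => t _ /=.
rewrite -big_mkcondr sum_nat_cond_const muln1.
have [tB|tnB] := boolP (t \in B).
  apply/card_le1_eqP => i j; rewrite !inE => /andP[iA ti] /andP[jA tj].
  case: (eqVneq i j) => // ij.
  by rewrite (disjointFr (Fdisj i j iA jA ij) ti) in tj.
rewrite leqn0 cards_eq0; apply/eqP/setP => i; rewrite !inE.
by apply/negbTE; apply: contra tnB => /andP[iA ti]; apply: subsetP (FB i iA) _ ti.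
Qed.

(** * Units and the radical of a finite ring *)

Section FiniteRing.
Variable R : finNzRingType.
Implicit Types x y z r s u : R.

(* Finiteness makes the injective map [r |-> y * r] onto, so [y] has a right inverse. *)
Lemma mulr_eq1C x y : x * y = 1 -> y * x = 1.
Proof.
move=> xy.
have injy : injective (fun r : R => y * r).
  by move=> r1 r2 /= e; rewrite -[r1]mul1r -[r2]mul1r -xy -!mulrA e.
have [z yz] : exists z, y * z = 1.
  by have [g _ gK] := injF_bij injy; exists (g 1); rewrite gK.
suff -> : x = z by [].
by rewrite -[x]mulr1 -yz mulrA xy mul1r.
Qed.

Lemma unitRP x : reflect (exists y, x * y = 1) (is_unitR x).
Proof.
apply: (iffP existsP) => [[y /andP[/eqP xy _]]|[y xy]]; first by exists y.
by exists y; rewrite xy (mulr_eq1C xy) !eqxx.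
Qed.

Lemma unitRPl x : reflect (exists y, y * x = 1) (is_unitR x).
Proof. by apply: (iffP (unitRP x)) => -[y h]; exists y; apply: mulr_eq1C. Qed.

Definition uinv x := odflt 0 [pick y | x * y == 1].

Lemma mulr_uinv x : is_unitR x -> x * uinv x = 1.
Proof.
move/unitRP=> [y xy]; rewrite /uinv; case: pickP => [z /eqP //|/(_ y)].
by rewrite xy eqxx.
Qed.

Lemma mul_uinvr x : is_unitR x -> uinv x * x = 1.
Proof. by move/mulr_uinv/mulr_eq1C. Qed.

Lemma unitR_uinv x : is_unitR x -> is_unitR (uinv x).
Proof. by move=> ux; apply/unitRP; exists x; rewrite mul_uinvr. Qed.

Lemma unitR1 : is_unitR (1 : R).
Proof. by apply/unitRP; exists 1; rewrite mulr1. Qed.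

Lemma unitR0 : ~~ is_unitR (0 : R).
Proof. by apply/unitRP => -[y]; rewrite mul0r => /eqP; rewrite eq_sym oner_eq0. Qed.

Lemma unitRM x y : is_unitR x -> is_unitR y -> is_unitR (x * y).
Proof.
move=> ux uy; apply/unitRP; exists (uinv y * uinv x).
by rewrite mulrA -(mulrA x) mulr_uinv // mulr1 mulr_uinv.
Qed.

Lemma unitR_mul_eq0 u r : is_unitR u -> u * r = 0 -> r = 0.
Proof. by move=> uu ur; rewrite -[r]mul1r -(mul_uinvr uu) -mulrA ur mulr0. Qed.

Lemma nonunit_left_zero_divisor x : ~~ is_unitR x -> exists2 s, s != 0 & s * x = 0.
Proof.
move=> nux; have [/existsP[s /andP[s0 /eqP sx]]|nzd] := boolP [exists s, (s != 0) && (s * x == 0)].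
  by exists s.
have injx : injective (fun r : R => r * x).
  move=> r1 r2 /= e; apply/eqP; rewrite -subr_eq0; apply: contraNT nzd => ne.
  by apply/existsP; exists (r1 - r2); rewrite ne mulrBl e subrr eqxx.
have [g _ gK] := injF_bij injx.
by case/negP: nux; apply/unitRPl; exists (g 1); rewrite /= gK.
Qed.

Lemma radP x : reflect (forall r, is_unitR (1 - r * x)) (x \in radR R).
Proof. by rewrite inE; apply: (iffP forallP). Qed.

Lemma rad0 : (0 : R) \in radR R.
Proof. by apply/radP => r; rewrite mulr0 subr0 unitR1. Qed.

Lemma radMl r x : x \in radR R -> r * x \in radR R.
Proof. by move/radP=> h; apply/radP => s; rewrite mulrA h. Qed.

Lemma radN x : x \in radR R -> - x \in radR R.
Proof. by move=> h; rewrite -mulN1r radMl. Qed.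

Lemma unitRD_rad u x : is_unitR u -> x \in radR R -> is_unitR (u + x).
Proof.
move=> uu /radP h.
suff -> : u + x = u * (1 - (- uinv u) * x) by apply: unitRM.
by rewrite mulrBr mulr1 mulNr mulrN opprK mulrA mulr_uinv // mul1r.
Qed.

Lemma radD x y : x \in radR R -> y \in radR R -> x + y \in radR R.
Proof.
move=> /radP hx hy; apply/radP => r.
rewrite mulrDr opprD addrA; apply: unitRD_rad => //.
by rewrite radN ?radMl.
Qed.

Lemma radB x y : x \in radR R -> y \in radR R -> x - y \in radR R.
Proof. by move=> hx hy; rewrite radD ?radN. Qed.

Lemma rad_nunit x : x \in radR R -> ~~ is_unitR x.
Proof.
move=> /radP h; apply/negP => ux; have := h (uinv x).
by rewrite mul_uinvr // subrr (negPf unitR0).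
Qed.

Lemma rad1 : (1 : R) \notin radR R.
Proof. by apply: contraL unitR1 => /rad_nunit. Qed.

(* A nonzero [s] with [R s] minimal is killed by [rad R], by Nakayama's argument. *)
Lemma exists_rad_annihilated : exists2 s : R, s != 0 & forall a, a \in radR R -> a * s = 0.
Proof.
pose Rs s := [set b * s | b in [set: R]].
have [s s0 smin] := @arg_minnP _ 1 (fun s : R => s != 0) (fun s => #|Rs s|) (oner_neq0 R).
exists s => // a ha; apply: contraNeq s0 => as0.
have sub : Rs (a * s) \subset Rs s.
  by apply/subsetP=> _ /imsetP[b _ ->]; apply/imsetP; exists (b * a); rewrite ?inE ?mulrA.
have : s \in Rs (a * s).
  have /eqP -> : Rs (a * s) == Rs s by rewrite eqEcard sub smin.
  by apply/imsetP; exists 1; rewrite ?inE ?mul1r.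
case/imsetP=> b _ eb; apply/eqP; apply: (@unitR_mul_eq0 (1 - b * a)); first by move/radP: ha.
by rewrite mulrBl mul1r -mulrA -eb subrr.
Qed.

Lemma rad_group_set : group_set (radR R).
Proof. by apply/group_setP; split=> [|x y]; [apply: rad0 | apply: radD]. Qed.

Definition rad_group := Group rad_group_set.

Lemma card_radR_gt0 : (0 < #|radR R|)%N.
Proof. by rewrite card_gt0; apply/set0Pn; exists 0; apply: rad0. Qed.

Lemma residue_orderE : residue_order R = #|[set: R] : radR R|%g.
Proof.
by rewrite /residue_order -(Lagrange (subsetT rad_group)) mulKn ?card_radR_gt0.
Qed.

Lemma card_residue : #|[set: R]| = (residue_order R * #|radR R|)%N.
Proof. by rewrite residue_orderE mulnC (Lagrange (subsetT rad_group)). Qed.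

Lemma residue_order_ge2 : (2 <= residue_order R)%N.
Proof.
have : (#|radR R| < #|[set: R]|)%N.
  by apply: proper_card; rewrite properT; apply: contraNneq rad1 => ->; rewrite inE.
rewrite card_residue -{1}[#|radR R|]mul1n ltn_pmul2r ?card_radR_gt0 //.
Qed.

End FiniteRing.

(** * The composition length bounds the radical *)

Section LeftIdeals.
Variable R : finNzRingType.
Implicit Types (x y r : R) (I J K : {set R}).

Lemma lidealP I :
  reflect [/\ 0 \in I, {in I &, forall x y, x - y \in I} & forall r, {in I, forall x, r * x \in I}]
          (is_lideal I).
Proof.
apply: (iffP and3P) => [[I0 /forall_inP IB /forallP IM]|[I0 IB IM]]; split=> //.
- by move=> x y xI yI; move/forall_inP: (IB x xI); apply.
- by move=> r x xI; move/forall_inP: (IM r); apply.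
- by apply/forall_inP=> x xI; apply/forall_inP=> y yI; apply: IB.
- by apply/forallP=> r; apply/forall_inP=> x xI; apply: IM.
Qed.

Section OneIdeal.
Variable I : {set R}.
Hypothesis lidI : is_lideal I.

Lemma lideal0 : 0 \in I. Proof. by case/lidealP: lidI. Qed.
Lemma lidealB : {in I &, forall x y, x - y \in I}. Proof. by case/lidealP: lidI. Qed.
Lemma lidealM r : {in I, forall x, r * x \in I}. Proof. by case/lidealP: lidI. Qed.
Lemma lidealN : {in I, forall x, - x \in I}.
Proof. by move=> x xI; rewrite -sub0r lidealB ?lideal0. Qed.
Lemma lidealD : {in I &, forall x y, x + y \in I}.
Proof. by move=> x y xI yI; rewrite -[y]opprK lidealB ?lidealN. Qed.

End OneIdeal.

Lemma rad_lideal : is_lideal (radR R).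
Proof. by apply/lidealP; split=> [|x y|r x]; [apply: rad0 | apply: radB | apply: radMl]. Qed.

Lemma setT_lideal : is_lideal [set: R].
Proof. by apply/lidealP; split=> [|? ? _ _|? ? _]; rewrite inE. Qed.

Lemma set0_lideal : is_lideal [set 0 : R].
Proof.
apply/lidealP; split=> [|x y|r x]; rewrite ?inE //.
  by move=> /eqP-> /eqP->; rewrite subrr.
by move=> /eqP->; rewrite mulr0.
Qed.

Definition lideal_cover J I : Prop :=
  [/\ is_lideal J, is_lideal I, J \proper I &
      forall K, is_lideal K -> J \proper K -> K \subset I -> K = I].

Definition lideal_adjoin J y := [set j + b * y | j in J, b in [set: R]].

Lemma lideal_adjoin_lideal J y : is_lideal J -> is_lideal (lideal_adjoin J y).
Proof.
move=> lidJ; apply/lidealP; split.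
- by apply/imset2P; exists 0 0; rewrite ?inE ?lideal0 // mul0r addr0.
- move=> _ _ /imset2P[j b jJ _ ->] /imset2P[j' b' j'J _ ->].
  apply/imset2P; exists (j - j') (b - b'); rewrite ?inE ?lidealB //.
  by rewrite mulrBl opprD !addrA [j - j' + _]addrAC.
- move=> r _ /imset2P[j b jJ _ ->]; apply/imset2P; exists (r * j) (r * b).
  + exact: lidealM.
  + by rewrite inE.
  + by rewrite mulrDr mulrA.
Qed.

Lemma lideal_cover_adjoin J I y : lideal_cover J I -> y \in I -> y \notin J ->
  lideal_adjoin J y = I.
Proof.
move=> [lidJ lidI JI Imax] yI yJ; apply: Imax; first exact: lideal_adjoin_lideal.
- rewrite properE; apply/andP; split.
    by apply/subsetP=> j jJ; apply/imset2P; exists j 0; rewrite ?inE // mul0r addr0.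
  apply/subsetPn; exists y => //; apply/imset2P; exists 0 1; rewrite ?inE ?lideal0 //.
  by rewrite mul1r add0r.
- apply/subsetP=> _ /imset2P[j b jJ _ ->]; rewrite lidealD ?lidealM //.
  by move/proper_sub/subsetP: JI; apply.
Qed.

(* [I = J + R y] and [rad R * y \subset J], so [y] times coset representatives of
   [rad R] already reaches every coset of [J] in [I]. *)
Lemma card_lideal_cover J I : lideal_cover J I -> (#|I| <= residue_order R * #|J|)%N.
Proof.
move=> cJI; have [lidJ lidI JI _] := cJI.
have [y yI yJ] : exists2 y, y \in I & y \notin J by case/properP: JI => _ [y]; exists y.
have eI := lideal_cover_adjoin cJI yI yJ.
have radyJ a : a \in radR R -> a * y \in J.
  move=> arad; apply: contraNT yJ => ayJ.
  have : y \in lideal_adjoin J (a * y).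
    by rewrite (lideal_cover_adjoin cJI _ ayJ) // lidealM.
  case/imset2P=> j b jJ _ ey.
  have u : is_unitR (1 - b * a) by move/radP: arad.
  have ej : (1 - b * a) * y = j by rewrite mulrBl mul1r {1}ey -mulrA addrK.
  by rewrite -[y]mul1r -(mul_uinvr u) -mulrA ej lidealM.
pose C := [set repr X | X in rcosets (radR R) [set: R]].
have cardC : (#|C| <= residue_order R)%N by rewrite residue_orderE leq_imset_card.
have : I \subset [set t.1 + t.2 * y | t in setX J C].
  apply/subsetP=> z; rewrite -{1}eI => /imset2P[j a jJ _ ->].
  have : a \in (radR R :* a)%g by rewrite (rcoset_refl (rad_group R)).
  move/mem_repr; set c := repr _ => ca.
  have cC : c \in C.
    by apply/imsetP; exists (radR R :* a)%g => //; apply/imsetP; exists a; rewrite ?inE ?rcosetE.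
  move: ca; rewrite mem_rcoset => ca.
  apply/imsetP; exists (j - (c * y - a * y), c).
    by rewrite inE /= cC andbT lidealB // -mulrBl radyJ.
  by rewrite /= opprB -addrA subrK.
move/subset_leq_card/leq_trans; apply; apply: (leq_trans (leq_imset_card _ _)).
by rewrite cardsX mulnC leq_mul2r cardC orbT.
Qed.

Lemma lideal_chain_rcons s J I : lideal_chain (rcons s J) -> is_lideal I -> J \proper I ->
  lideal_chain (rcons (rcons s J) I).
Proof.
move=> [sJ ssJ] lidI JI; split; first by rewrite all_rcons lidI.
by case: s sJ ssJ => [|x s] _ /=; rewrite ?JI // !rcons_path last_rcons JI andbT.
Qed.

Lemma lideal_chain_below I : is_lideal I ->
  exists s, lideal_chain (rcons s I) /\ (#|I| <= residue_order R ^ size s)%N.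
Proof.
have [n] := ubnP #|I|; elim: n I => // n IH I; rewrite ltnS => In lidI.
have [I1|I_gt1] := leqP #|I| 1.
  by exists [::]; rewrite expn0; split=> //; split=> //=; rewrite lidI.
have OI : is_lideal [set 0 : R] && ([set 0] \proper I).
  rewrite set0_lideal properEcard cards1 I_gt1 andbT.
  by apply/subsetP => x; rewrite inE => /eqP->; apply: lideal0.
have [J /andP[lidJ JI] Jmax] :=
  @arg_maxnP _ _ (fun J => is_lideal J && (J \proper I)) (fun J => #|J|) OI.
have cJI : lideal_cover J I.
  split=> // K lidK JK KI; apply/eqP; apply: contraTT (proper_card JK) => KnI.
  by rewrite -leqNgt; apply: Jmax; rewrite lidK properEneq KnI.
have [s [chs cardJ]] := IH J (leq_trans (proper_card JI) In) lidJ.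
exists (rcons s J); split; first exact: lideal_chain_rcons.
rewrite size_rcons expnS (leq_trans (card_lideal_cover cJI)) //.
by rewrite leq_mul2l cardJ orbT.
Qed.

Lemma card_radR_le m : comp_length R m -> (#|radR R| <= residue_order R ^ (m - 1))%N.
Proof.
move=> [_ maxm].
have [s [chs cardrad]] := lideal_chain_below rad_lideal.
have radT : radR R \proper [set: R] by rewrite properT; apply: contraNneq (rad1 R) => ->.
have := maxm _ (lideal_chain_rcons chs setT_lideal radT); rewrite !size_rcons !ltnS => sm.
apply: (leq_trans cardrad); rewrite leq_pexp2l //; last by lia.
by rewrite (leq_trans _ (residue_order_ge2 R)).
Qed.

End LeftIdeals.

Section ChainRing.
Variable R : finNzRingType.
Hypothesis chR : chain_ring R.
Implicit Types x y r : R.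

Definition lprincipal x := [set a * x | a in [set: R]].

Lemma lprincipal_lideal x : is_lideal (lprincipal x).
Proof.
apply/lidealP; split=> [|_ _ /imsetP[a _ ->] /imsetP[b _ ->]|r _ /imsetP[a _ ->]].
- by apply/imsetP; exists 0; rewrite ?inE ?mul0r.
- by apply/imsetP; exists (a - b); rewrite ?inE ?mulrBl.
- by apply/imsetP; exists (r * a); rewrite ?inE ?mulrA.
Qed.

Lemma mem_lprincipal x : x \in lprincipal x.
Proof. by apply/imsetP; exists 1; rewrite ?inE ?mul1r. Qed.

Lemma ldiv_total x y : (exists r, x = r * y) \/ (exists r, y = r * x).
Proof.
have [/subsetP xy|/subsetP yx] := chR (lprincipal_lideal x) (lprincipal_lideal y).
  by left; have /imsetP[r _ ->] := xy _ (mem_lprincipal x); exists r.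
by right; have /imsetP[r _ ->] := yx _ (mem_lprincipal y); exists r.
Qed.

Lemma radE x : (x \in radR R) = ~~ is_unitR x.
Proof.
apply/idP/idP=> [/rad_nunit //|nux]; apply/radP => r.
apply: contraR nux => nu1; case: (ldiv_total x (1 - r * x)) => -[a ea].
- by case/negP: nu1; apply/unitRPl; exists (1 + r * a); rewrite mulrDl mul1r -mulrA -ea subrK.
- by apply/unitRPl; exists (a + r); rewrite mulrDl -ea subrK.
Qed.

Lemma radMr x r : x \in radR R -> x * r \in radR R.
Proof.
rewrite !radE; apply: contra => uxr.
by apply/unitRP; exists (r * uinv (x * r)); rewrite mulrA mulr_uinv.
Qed.

End ChainRing.

(** * Points and lines of PHG(2, R) *)

Section Vectors.
Variable R : finNzRingType.
Implicit Types (a b c r s u : R) (x y w v e z : vec R).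

Definition span1 x := [set vsmul x r | r : R].
Definition span2 x y := [set vadd (vsmul x r) (vsmul y s) | r : R, s : R].
Definition vfree x := [forall r : R, (vsmul x r == vzero R) ==> (r == 0)].
Definition indep x y := [forall r : R, [forall s : R,
  (vadd (vsmul x r) (vsmul y s) == vzero R) ==> ((r == 0) && (s == 0))]].

Lemma pointE P : is_point P = [exists x, (P == span1 x) && vfree x].
Proof. by []. Qed.

Lemma lineE L : is_line L = [exists x, [exists y, (L == span2 x y) && indep x y]].
Proof. by []. Qed.

Lemma vaddE x y l : vadd x y l = x l + y l. Proof. by rewrite ffunE. Qed.
Lemma vsmulE x r l : vsmul x r l = x l * r. Proof. by rewrite ffunE. Qed.
Lemma vzeroE l : vzero R l = 0. Proof. by rewrite ffunE. Qed.

Lemma vaddC x y : vadd x y = vadd y x.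
Proof. by apply/ffunP => l; rewrite !vaddE addrC. Qed.

Lemma vfreeP x : reflect (forall r, vsmul x r = vzero R -> r = 0) (vfree x).
Proof.
apply: (iffP forallP) => [h r xr|h r]; last by apply/implyP => /eqP/h ->.
by apply/eqP; move/implyP: (h r); apply; rewrite xr.
Qed.

Lemma indepP x y :
  reflect (forall r s, vadd (vsmul x r) (vsmul y s) = vzero R -> r = 0 /\ s = 0) (indep x y).
Proof.
apply: (iffP forallP) => [h r s e|h r].
  by move/forallP/(_ s)/implyP: (h r); rewrite e eqxx => /(_ isT)/andP[/eqP ? /eqP ?].
by apply/forallP => s; apply/implyP => /eqP/h[-> ->]; rewrite !eqxx.
Qed.

Lemma vfree_unit x l : is_unitR (x l) -> vfree x.
Proof.
move=> ul; apply/vfreeP => r /ffunP/(_ l); rewrite vsmulE vzeroE.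
exact: unitR_mul_eq0.
Qed.

Lemma span2P x y v :
  reflect (exists r s, v = vadd (vsmul x r) (vsmul y s)) (v \in span2 x y).
Proof.
by apply: (iffP imset2P) => [[r s _ _ ->]|[r [s ->]]]; [exists r, s | exists r s].
Qed.

Lemma mem_span2l x y : x \in span2 x y.
Proof. by apply/span2P; exists 1, 0; apply/ffunP => l; rewrite !ffunE mulr1 mulr0 addr0. Qed.

Lemma mem_span2r x y : y \in span2 x y.
Proof. by apply/span2P; exists 0, 1; apply/ffunP => l; rewrite !ffunE mulr1 mulr0 add0r. Qed.

Lemma span2C x y : span2 x y = span2 y x.
Proof.
by apply/setP => v; apply/span2P/span2P => -[r [s ->]]; exists s, r; rewrite vaddC.
Qed.

Lemma indepC x y : indep x y -> indep y x.
Proof.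
move/indepP => h; apply/indepP => r s e.
by have [] := h s r; rewrite 1?vaddC //; move=> -> ->.
Qed.

Lemma span2_change x y u c : is_unitR u ->
  span2 x y = span2 x (vadd (vsmul y u) (vsmul x c)).
Proof.
move=> uu; apply/setP => v; apply/span2P/span2P => -[r [s ->]].
  exists (r - c * (uinv u * s)), (uinv u * s); apply/ffunP => l.
  rewrite !ffunE mulrBr mulrDl !mulrA -(mulrA (y l) u) mulr_uinv // mulr1.
  by rewrite [y l * s + _]addrC addrA subrK.
exists (r + c * s), (u * s); apply/ffunP => l.
by rewrite !ffunE mulrDr mulrDl !mulrA addrA [x l * r + _ + _]addrAC.
Qed.

Lemma indep_change x y u c : is_unitR u -> indep x y ->
  indep x (vadd (vsmul y u) (vsmul x c)).
Proof.
move=> uu /indepP h; apply/indepP => r s e.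
have [rcs us] : r + c * s = 0 /\ u * s = 0.
  apply: h; rewrite -e; apply/ffunP => l.
  by rewrite !ffunE mulrDr mulrDl !mulrA addrA [x l * r + _ + _]addrAC.
have s0 := unitR_mul_eq0 uu us.
by move: rcs; rewrite s0 mulr0 addr0.
Qed.

Lemma span1_subset x y v : v \in span2 x y -> span1 v \subset span2 x y.
Proof.
case/span2P => r [s ->]; apply/subsetP => _ /imsetP[t _ ->].
by apply/span2P; exists (r * t), (s * t); apply/ffunP => l; rewrite !ffunE mulrDl !mulrA.
Qed.

Lemma mem_span1 x : x \in span1 x.
Proof. by apply/imsetP; exists 1 => //; apply/ffunP => l; rewrite vsmulE mulr1. Qed.

Lemma span1_unit x u : is_unitR u -> span1 (vsmul x u) = span1 x.
Proof.
move=> uu; apply/setP => v; apply/imsetP/imsetP => -[r _ ->].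
  by exists (u * r) => //; apply/ffunP => l; rewrite !vsmulE mulrA.
exists (uinv u * r) => //; apply/ffunP => l.
by rewrite !vsmulE mulrA -(mulrA (x l)) mulr_uinv // mulr1.
Qed.

Lemma indep_vfreer x w : indep x w -> vfree w.
Proof.
move/indepP => iw; apply/vfreeP => s ws; have [] // := iw 0 s.
by apply/ffunP => l; rewrite vaddE !vsmulE mulr0 add0r -vsmulE ws.
Qed.

Lemma span2_scale x w u : is_unitR u -> span2 x (vsmul w u) = span2 x w.
Proof.
move=> uu; rewrite [RHS](span2_change x w 0 uu); congr span2.
by apply/ffunP => l; rewrite vaddE !vsmulE mulr0 addr0.
Qed.

Definition radvec := [set z : vec R | [forall l, z l \in radR R]].

Lemma radvecP z : reflect (forall l, z l \in radR R) (z \in radvec).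
Proof. by rewrite inE; apply: forallP. Qed.

Lemma card_radvec : #|radvec| = (#|radR R| ^ 3)%N.
Proof.
rewrite -[in RHS](card_ord 3) -card_ffun_on; apply: eq_card => z.
by rewrite inE; apply/forallP/ffun_onP.
Qed.

End Vectors.

Lemma frame_exists (i : 'I_3) : exists j k, [&& i != j, i != k & j != k].
Proof.
case: i => [[|[|[|?]]] ?] //.
- by exists (Ordinal (isT : (1 < 3)%N)), (Ordinal (isT : (2 < 3)%N)).
- by exists (Ordinal (isT : (0 < 3)%N)), (Ordinal (isT : (2 < 3)%N)).
- by exists (Ordinal (isT : (0 < 3)%N)), (Ordinal (isT : (1 < 3)%N)).
Qed.

Section ChainVectors.
Variable R : finNzRingType.
Hypothesis chR : chain_ring R.
Implicit Types (a b c d r s u : R) (x y w v e z : vec R).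

Lemma frame_ldiv (i : 'I_3) e :
  exists j k r, [&& i != j, i != k & j != k] /\ e j = r * e k.
Proof.
have [j [k /and3P[hij hik hjk]]] := frame_exists i.
case: (ldiv_total chR (e j) (e k)) => -[r er].
  by exists j, k, r; rewrite hij hik hjk.
by exists k, j, r; rewrite hij hik eq_sym hjk.
Qed.

(* [rad R] annihilates a nonzero scalar, so a vector over [rad R] is never free. *)
Lemma vfree_has_unit x : vfree x -> exists l, is_unitR (x l).
Proof.
move=> fx; have [s s0 rad_s] := exists_rad_annihilated R.
have [/existsP[l ul]|nu] := boolP [exists l, is_unitR (x l)]; first by exists l.
case/negP: s0; apply/eqP; move/vfreeP: fx; apply; apply/ffunP => l.
rewrite vsmulE vzeroE rad_s // radE //; apply: contra nu => ul.
by apply/existsP; exists l.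
Qed.

Lemma vfree_radvec x : vfree x -> x \notin radvec R.
Proof.
move/vfree_has_unit => [l ul]; apply/negP => /radvecP/(_ l).
by rewrite radE // ul.
Qed.

Lemma card_vfree_le : (#|[set v : vec R | vfree v]| + #|radR R| ^ 3 <= #|[set: R]| ^ 3)%N.
Proof.
have -> : (#|[set: R]| ^ 3)%N = #|[set: vec R]| by rewrite !cardsT card_ffun card_ord.
rewrite -(card_radvec R) -cardsUI.
have -> : [set v : vec R | vfree v] :&: radvec R = set0.
  apply/setP => v; rewrite in_setI in_set0 [v \in [set _ | _]]inE.
  by case: (boolP (vfree v)) => // /vfree_radvec /negbTE.
by rewrite cards0 addn0 subset_leq_card ?subsetT.
Qed.

Lemma point_normal P : is_point P -> exists x l, P = span1 x /\ x l = 1.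
Proof.
rewrite pointE => /existsP[x0 /andP[/eqP -> fx]]; have [l ul] := vfree_has_unit fx.
exists (vsmul x0 (uinv (x0 l))), l; split; first by rewrite span1_unit // unitR_uinv.
by rewrite vsmulE mulr_uinv.
Qed.

Definition pgen P := odflt (vzero R) [pick x | (P == span1 x) && [exists l, x l == 1]].

Lemma pgenP P : is_point P -> P = span1 (pgen P) /\ exists l, pgen P l = 1.
Proof.
move=> pP; rewrite /pgen; case: pickP => [x /andP[/eqP eP /existsP[l /eqP xl]]|nx] /=.
  by split=> //; exists l.
have [x [l [eP xl]]] := point_normal pP.
by have := nx x; rewrite eP eqxx /=; move/negbT/existsPn/(_ l); rewrite xl eqxx.
Qed.

Lemma line_through_span2 x l L : x l = 1 -> is_line L -> x \in L ->
  exists w, [/\ L = span2 x w, indep x w & w l = 0].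
Proof.
rewrite lineE => xl /existsP[a /existsP[b /andP[/eqP eL iab]]] xL.
have [al [be ex]] : exists al be, x = vadd (vsmul a al) (vsmul b be).
  by apply/span2P; rewrite -eL.
have [w [eLw ixw]] : exists w, L = span2 x w /\ indep x w.
  have [ual|nual] := boolP (is_unitR al).
    exists b; rewrite eL span2C (span2_change b a be ual) -ex span2C; split=> //.
    by apply: indepC; rewrite ex; exact: (indep_change be ual (indepC iab)).
  have ube : is_unitR be.
    apply: contraR (rad1 R) => nube; rewrite -xl ex vaddE !vsmulE.
    by rewrite radD // radMl // radE.
  exists a; rewrite eL (span2_change a b al ube) vaddC -ex span2C; split=> //.
  by apply: indepC; rewrite ex vaddC; exact: (indep_change al ube iab).
exists (vadd (vsmul w 1) (vsmul x (- w l))); split.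
- by rewrite eLw -span2_change ?unitR1.
- exact: (indep_change (- w l) (unitR1 R) ixw).
- by rewrite vaddE !vsmulE xl mulr1 mul1r subrr.
Qed.

(* Generators of the points neighbouring [span1 x], i.e. with the same image in
   the residue plane. *)
Definition nbhd x := [set vadd (vsmul x u) z | u in ~: radR R, z in radvec R].

Lemma nbhd_vfree x l v : x l = 1 -> v \in nbhd x -> vfree v.
Proof.
move=> xl /imset2P[u z nu /radvecP zrad ->]; apply: (@vfree_unit _ _ l).
rewrite vaddE vsmulE xl mul1r unitRD_rad //.
by move: nu; rewrite in_setC radE // negbK.
Qed.

Lemma nbhd_meet x y v : v \in nbhd x -> v \in nbhd y ->
  exists al e, [/\ is_unitR al, e \in radvec R & y = vadd (vsmul x al) e].
Proof.
move=> /imset2P[u z nu /radvecP zrad ->] /imset2P[u' z' nu' /radvecP z'rad /ffunP ev].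
move: nu nu'; rewrite !in_setC !radE // !negbK => uu uu'.
exists (u * uinv u'), [ffun l => (z l - z' l) * uinv u']; split.
- by rewrite unitRM ?unitR_uinv.
- by apply/radvecP => l; rewrite ffunE radMr ?radB.
apply/ffunP => l; have := ev l; rewrite !vaddE !vsmulE ffunE => el.
have -> : y l = (x l * u + z l - z' l) * uinv u' by rewrite el addrK -mulrA mulr_uinv ?mulr1.
by rewrite !mulrBl mulrDl !mulrA addrA.
Qed.

End ChainVectors.

Section Frame.
Variable R : finNzRingType.
Hypothesis chR : chain_ring R.
Variables i j k : 'I_3.
Hypotheses (hij : i != j) (hik : i != k) (hjk : j != k).
Implicit Types (a b c d r s u : R) (x y w v e z : vec R).

Lemma ord3_frame l : [|| l == i, l == j | l == k].
Proof.
by move: i j k l hij hik hjk => [[|[|[|?]]] ?] [[|[|[|?]]] ?] [[|[|[|?]]] ?] [[|[|[|?]]] ?].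
Qed.

Lemma vec3P x y : x i = y i -> x j = y j -> x k = y k -> x = y.
Proof.
by move=> ei ej ek; apply/ffunP => l; case/or3P: (ord3_frame l) => /eqP->.
Qed.

Definition vec3 a b c : vec R := [ffun l => if l == i then a else if l == j then b else c].

Lemma vec3_i a b c : vec3 a b c i = a.
Proof. by rewrite ffunE eqxx. Qed.
Lemma vec3_j a b c : vec3 a b c j = b.
Proof. by rewrite ffunE eq_sym (negPf hij) eqxx. Qed.
Lemma vec3_k a b c : vec3 a b c k = c.
Proof. by rewrite ffunE eq_sym (negPf hik) eq_sym (negPf hjk). Qed.

Lemma frame_line x c : x i = 1 -> is_line (span2 x (vec3 0 c 1)).
Proof.
move=> xi; rewrite lineE; apply/existsP; exists x; apply/existsP; exists (vec3 0 c 1).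
rewrite eqxx; apply/indepP => r s /ffunP e.
have := e i; rewrite vaddE !vsmulE vzeroE vec3_i xi mul1r mul0r addr0 => r0.
by have := e k; rewrite vaddE !vsmulE vzeroE vec3_k r0 mulr0 mul1r add0r.
Qed.

Lemma frame_line_mem x beta e c : e i = 0 -> e j = c * e k ->
  vadd (vsmul x beta) e \in span2 x (vec3 0 c 1).
Proof.
move=> ei ej; apply/span2P; exists beta, (e k); congr vadd.
by apply: vec3P; rewrite vsmulE ?vec3_i ?vec3_j ?vec3_k ?mul0r ?mul1r.
Qed.

Lemma frame_line_inj x c d : x i = 1 ->
  span2 x (vec3 0 c 1) = span2 x (vec3 0 d 1) -> c = d.
Proof.
move=> xi eL; have := mem_span2r x (vec3 0 d 1); rewrite -eL => /span2P[a [b /ffunP e]].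
have := e i; rewrite vaddE !vsmulE !vec3_i xi mul1r mul0r addr0 => a0.
have := e k; rewrite vaddE !vsmulE !vec3_k -a0 mulr0 mul1r add0r => b1.
by have := e j; rewrite vaddE !vsmulE !vec3_j -a0 -b1 mulr0 mulr1 add0r.
Qed.

Definition frame_normals : {set vec R} :=
  [set vec3 0 1 c | c in [set: R]] :|: [set vec3 0 d 1 | d in radR R].

Lemma frame_line_normal x L : x i = 1 -> is_line L -> x \in L ->
  exists2 w, w \in frame_normals & L = span2 x w.
Proof.
move=> xi lL xL; have [w [-> iw wi]] := line_through_span2 chR xi lL xL.
have [uj|nuj] := boolP (is_unitR (w j)).
  exists (vsmul w (uinv (w j))); last by rewrite span2_scale ?unitR_uinv.
  apply/setUP; left; apply/imsetP; exists (w k * uinv (w j)); rewrite ?inE //.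
  by apply: vec3P; rewrite vsmulE ?vec3_i ?vec3_j ?vec3_k ?wi ?mul0r ?mulr_uinv.
have uk : is_unitR (w k).
  have [l ul] := vfree_has_unit chR (indep_vfreer iw).
  case/or3P: (ord3_frame l) ul => /eqP-> //; first by rewrite wi (negPf (unitR0 R)).
  by rewrite (negPf nuj).
exists (vsmul w (uinv (w k))); last by rewrite span2_scale ?unitR_uinv.
apply/setUP; right; apply/imsetP; exists (w j * uinv (w k)); first by rewrite radMr ?radE.
by apply: vec3P; rewrite vsmulE ?vec3_i ?vec3_j ?vec3_k ?wi ?mul0r ?mulr_uinv.
Qed.

Lemma card_lines_through_vec x : x i = 1 ->
  (#|[set L | is_line L && (span1 x \subset L)]| <= #|[set: R]| + #|radR R|)%N.
Proof.
move=> xi; apply: (@leq_trans #|span2 x @: frame_normals|).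
  apply/subset_leq_card/subsetP => L; rewrite inE => /andP[lL /subsetP sL].
  by have [w wN ->] := frame_line_normal xi lL (sL _ (mem_span1 x)); apply: imset_f.
apply: (leq_trans (leq_imset_card _ _)); apply: (leq_trans (leq_card_setU _ _)).
by rewrite leq_add ?leq_imset_card.
Qed.

Lemma card_nbhd x : x i = 1 ->
  ((#|[set: R]| - #|radR R|) * #|radR R| * #|radR R| <= #|nbhd x|)%N.
Proof.
move=> xi; pose D := setX (setX (~: radR R) (radR R)) (radR R).
pose g (t : R * R * R) := vadd (vsmul x t.1.1) (vec3 0 t.1.2 t.2).
have -> : ((#|[set: R]| - #|radR R|) * #|radR R| * #|radR R|)%N = #|D|.
  by rewrite !cardsX cardsT -(cardsC (radR R)) addKn.
rewrite -(@card_in_imset _ _ g).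
  apply/subset_leq_card/subsetP => v /imsetP[[[u a] b]].
  rewrite !in_setX /= => /andP[/andP[nu arad] brad] ->.
  apply/imset2P; exists u (vec3 0 a b) => //; apply/radvecP => l.
  by case/or3P: (ord3_frame l) => /eqP->; rewrite ?vec3_i ?vec3_j ?vec3_k ?rad0.
move=> [[u a] b] [[u' a'] b'] _ _ /ffunP e.
have eu : u = u' by have := e i; rewrite /g /= !vaddE !vsmulE !vec3_i xi !mul1r !addr0.
have ea : a = a' by have := e j; rewrite /g /= !vaddE !vsmulE !vec3_j eu => /addrI.
have eb : b = b' by have := e k; rewrite /g /= !vaddE !vsmulE !vec3_k eu => /addrI.
by rewrite eu ea eb.
Qed.

End Frame.

Section Plane.
Variable R : finNzRingType.
Hypothesis chR : chain_ring R.
Implicit Types (P Q L : {set vec R}) (x y e : vec R).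

Definition lines_through P := [set L | is_line L && (P \subset L)].
Definition nlines P Q := #|[set L in lines_through P | Q \subset L]|.

Lemma nlinesxx P : nlines P P = #|lines_through P|.
Proof. by apply: eq_card => L; rewrite !inE -andbA andbb. Qed.

Lemma card_lines_through P : is_point P -> (#|lines_through P| <= #|[set: R]| + #|radR R|)%N.
Proof.
move=> /(point_normal chR)[x [i [-> xi]]]; have [j [k /and3P[hij hik hjk]]] := frame_exists i.
exact: (card_lines_through_vec chR hij hik hjk xi).
Qed.

Lemma span2_mem_nlines P Q w : is_point P -> is_point Q ->
  is_line (span2 (pgen P) w) -> pgen Q \in span2 (pgen P) w ->
  span2 (pgen P) w \in [set L in lines_through P | Q \subset L].
Proof.
move=> pP pQ lL QL; have [eP _] := pgenP chR pP; have [eQ _] := pgenP chR pQ.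
by rewrite !inE lL {1}eP {1}eQ !span1_subset ?mem_span2l.
Qed.

Lemma nlines_gt0 P Q : is_point P -> is_point Q -> (0 < nlines P Q)%N.
Proof.
move=> pP pQ; have [_ [i xi]] := pgenP chR pP.
set x := pgen P in xi *.
pose e := vadd (pgen Q) (vsmul x (- pgen Q i)).
have [j [k [r [/and3P[hij hik hjk] ejr]]]] := frame_ldiv chR i e.
rewrite card_gt0; apply/set0Pn; exists (span2 x (vec3 i j 0 r 1)).
apply: span2_mem_nlines => //; first exact: (frame_line hik hjk _ xi).
have -> : pgen Q = vadd (vsmul x (pgen Q i)) e.
  by apply/ffunP => l; rewrite !vaddE !vsmulE mulrN addrC subrK.
by apply: (frame_line_mem hij hik hjk); rewrite // /e vaddE vsmulE xi mul1r subrr.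
Qed.

(* Two distinct neighbours [P], [Q] are joined by the lines with slopes [r] and
   [r + s], where [s] is a nonzero left annihilator of the radical coordinate. *)
Lemma nbhd_nlines P Q v : is_point P -> is_point Q -> P != Q ->
  v \in nbhd (pgen P) -> v \in nbhd (pgen Q) -> (1 < nlines P Q)%N.
Proof.
move=> pP pQ PQ vP vQ; have [eP [i xi]] := pgenP chR pP; have [eQ _] := pgenP chR pQ.
set x := pgen P in eP xi vP *.
have [al [e [ual /radvecP erad ey]]] := nbhd_meet chR vP vQ.
pose e' := vadd e (vsmul x (- e i)).
have ey' : pgen Q = vadd (vsmul x (al + e i)) e'.
  rewrite ey; apply/ffunP => l; rewrite !vaddE !vsmulE mulrDr mulrN.
  by rewrite addrCA -addrA subrr addr0 addrC.
have e'i : e' i = 0 by rewrite vaddE vsmulE xi mul1r subrr.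
have e'rad l : e' l \in radR R by rewrite vaddE vsmulE radD ?radMl ?radN.
have [j [k [r [/and3P[hij hik hjk] e'j]]]] := frame_ldiv chR i e'.
have e'k : e' k != 0.
  apply: contra_neq PQ => e'k0; rewrite eP eQ ey' -(span1_unit x (unitRD_rad ual (erad i))).
  by congr span1; apply: (vec3P hij hik hjk); rewrite vaddE ?e'i ?e'j ?e'k0 ?mulr0 addr0.
have [s s0 se'k] := nonunit_left_zero_divisor (rad_nunit (e'rad k)).
pose L c := span2 x (vec3 i j 0 c 1).
have Lin c : e' j = c * e' k -> L c \in [set L in lines_through P | Q \subset L].
  move=> e'jc; apply: span2_mem_nlines => //; first exact: (frame_line hik hjk _ xi).
  by rewrite ey'; apply: (frame_line_mem hij hik hjk).
have Lneq : L r != L (r + s).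
  by apply: contra_neq s0 => /(frame_line_inj hij hik hjk xi) rrs; rewrite -(addKr r s) -rrs addNr.
apply: (@leq_trans #|[set L r; L (r + s)]|); first by rewrite cards2 Lneq.
apply/subset_leq_card/subsetP => L'; rewrite in_set2 => /orP[]/eqP->; apply: Lin => //.
by rewrite mulrDl se'k addr0.
Qed.

End Plane.

(** * Arcs *)

Section Arc.
Variable R : finNzRingType.
Hypothesis chR : chain_ring R.
Variables (k : {set vec R} -> nat) (n : nat).
Hypothesis arc : is_arc k n 2.

Definition arc_support := [set P | 0 < k P]%N.

Lemma arc_support_point P : P \in arc_support -> is_point P.
Proof. by rewrite inE; case: arc => + _; apply. Qed.

(* Each line through [P] carries at most two arc points; sum over these lines. *)
Lemma arc_lines_through_count P : is_point P ->
  (n + k P * (#|lines_through P| - 1)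
     + \sum_(X | is_point X && (X != P)) k X * (nlines P X - 1)
   <= 2 * #|lines_through P|)%N.
Proof.
move=> pP; have [_ [ksum kline]] := arc.
have incid : (\sum_(L in lines_through P) \sum_(X | is_point X && (X \subset L)) k X =
              \sum_(X | is_point X) k X * nlines P X)%N.
  under eq_bigr do rewrite big_mkcondr.
  rewrite exchange_big /=; apply: eq_bigr => X _.
  by rewrite -big_mkcondr /= sum_nat_cond_const mulnC.
have split1 : (\sum_(X | is_point X) k X * nlines P X =
               n + \sum_(X | is_point X) k X * (nlines P X - 1))%N.
  rewrite -ksum -big_split /=; apply: eq_bigr => X pX.
  by rewrite -{1}(subnK (nlines_gt0 chR pP pX)) mulnDr muln1 addnC.
rewrite [in RHS](bigD1 P) //= nlinesxx addnA in split1.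
rewrite -split1 -incid; apply: (@leq_trans (\sum_(L in lines_through P) 2)).
  by apply: leq_sum => L; rewrite inE => /andP[lL _]; apply: kline.
by rewrite sum_nat_const mulnC.
Qed.

Lemma arc_mult_le1 P : (2 < n)%N -> (k P <= 1)%N.
Proof.
move=> n_gt2; rewrite leqNgt; apply/negP => kP2.
have pP : is_point P by apply: arc_support_point; rewrite inE; lia.
have := arc_lines_through_count pP; have := nlines_gt0 chR pP pP; rewrite nlinesxx.
set t := #|_|; set S := (\sum_(X | _) _)%N => t_gt0.
have : (2 * (t - 1) <= k P * (t - 1))%N by rewrite leq_mul2r kP2 orbT.
lia.
Qed.

Lemma card_arc_support : (2 < n)%N -> #|arc_support| = n.
Proof.
move=> n_gt2; have [supp [ksum _]] := arc; rewrite -ksum -sum1_card.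
rewrite [RHS](bigID (fun X => 0 < k X)%N) /= [X in (_ = _ + X)%N]big1 ?addn0; last first.
  by move=> X /andP[_]; rewrite -eqn0Ngt => /eqP.
apply: eq_big => X; rewrite inE.
  by apply/idP/andP => [kX|[]//]; split=> //; apply: supp.
by move=> kX; apply/eqP; rewrite eqn_leq kX arc_mult_le1.
Qed.

Lemma arc_nlines_le1 P Q : (#|[set: R]| + #|radR R| < n)%N ->
  P \in arc_support -> Q \in arc_support -> P != Q -> (nlines P Q <= 1)%N.
Proof.
move=> n_big PK QK PQ; have pP := arc_support_point PK; have pQ := arc_support_point QK.
move: PK QK; rewrite !inE => kP kQ.
have := arc_lines_through_count pP; have := card_lines_through chR pP.
have sQ : (k Q * (nlines P Q - 1) <= \sum_(X | is_point X && (X != P)) k X * (nlines P X - 1))%N.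
  by rewrite (bigD1 Q) /= ?pQ 1?eq_sym // leq_addr.
have : (nlines P Q - 1 <= k Q * (nlines P Q - 1))%N by rewrite leq_pmull.
have : (#|lines_through P| - 1 <= k P * (#|lines_through P| - 1))%N by rewrite leq_pmull.
move: sQ; set S := (\sum_(X | _) _)%N.
lia.
Qed.

Lemma arc_support_nbhd_disjoint P Q : (#|[set: R]| + #|radR R| < n)%N ->
  P \in arc_support -> Q \in arc_support -> P != Q ->
  [disjoint nbhd (pgen P) & nbhd (pgen Q)].
Proof.
move=> n_big PK QK PQ; apply/pred0P => v /=; apply/negP => /andP[vP vQ].
have := arc_nlines_le1 n_big PK QK PQ.
by rewrite leqNgt (nbhd_nlines chR (arc_support_point PK) (arc_support_point QK) PQ vP vQ).
Qed.

Lemma arc_packing : (2 < n)%N -> (#|[set: R]| + #|radR R| < n)%N ->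
  (n * ((#|[set: R]| - #|radR R|) * #|radR R| * #|radR R|) + #|radR R| ^ 3
     <= #|[set: R]| ^ 3)%N.
Proof.
move=> n_gt2 n_big; apply: leq_trans (card_vfree_le chR); rewrite leq_add2r.
apply: (@leq_trans (\sum_(P in arc_support) #|nbhd (pgen P)|)).
  rewrite -(card_arc_support n_gt2) -sum_nat_const; apply: leq_sum => P PK.
  have [_ [i xi]] := pgenP chR (arc_support_point PK).
  have [j [l /and3P[hij hil hjl]]] := frame_exists i.
  exact: (card_nbhd hij hil hjl xi).
apply: sum_card_disjoint_le => [P PK|P Q PK QK PQ]; last exact: arc_support_nbhd_disjoint.
have [_ [l xl]] := pgenP chR (arc_support_point PK).
by apply/subsetP => v /(nbhd_vfree chR xl); rewrite inE.
Qed.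

End Arc.

Lemma hyperoval_packing_absurd q p r : (2 <= q)%N -> (0 < r)%N -> (q * q <= p)%N ->
  ~ ((q * p + p + 1) * ((q * r - r) * r * r) + r ^ 3 <= (q * r) ^ 3)%N.
Proof.
move=> q2 r0 qqp; have -> : (q * r - r = (q - 1) * r)%N by rewrite mulnBl mul1n.
have -> : ((q * p + p + 1) * ((q - 1) * r * r * r) + r ^ 3
           = r ^ 3 * ((q * p + p + 1) * (q - 1) + 1))%N.
  by rewrite !expnS expn0; move: (q - 1)%N => s; nia.
rewrite expnMn [(q ^ 3 * _)%N]mulnC leq_pmul2l ?expn_gt0 ?r0 // !expnS expn0.
nia.
Qed.

Theorem mainTheorem2 (R : finNzRingType) (m : nat) :
  chain_ring R -> comp_length R m -> (3 <= m)%N ->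
  ~ (exists k : {set vec R} -> nat,
       is_arc k (residue_order R ^ m + residue_order R ^ (m - 1) + 1)%N 2).
Proof.
move=> chR cl m3 [k arc].
have q2 := residue_order_ge2 R; have r0 := card_radR_gt0 R.
have rp := card_radR_le cl; have cardR := card_residue R.
set q := residue_order R in arc q2 rp cardR *; set r := #|radR R| in r0 rp cardR *.
have qqp : (q * q <= q ^ (m - 1))%N by rewrite mulnn leq_pexp2l; lia.
have qm : (q ^ m = q * q ^ (m - 1))%N by rewrite -expnS; congr (_ ^ _)%N; lia.
rewrite {}qm in arc.
move: (q ^ (m - 1))%N qqp rp arc => p qqp rp arc.
apply: (hyperoval_packing_absurd q2 r0 qqp).
rewrite -cardR; apply: (arc_packing chR arc); rewrite ?cardR; nia.
Qed.
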